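(* Let a target $T$ be fixed at an unknown point $(x_T,y_T)\in\mathbb{R}^2$, and consider a UAV with planar unicycle dynamics $\dot x=V\cos\psi$, $\dot y=V\sin\psi$, $\dot\psi=\omega$, where $V>0$ is a constant speed. Let $r(t)=\sqrt{(x(t)-x_T)^2+(y(t)-y_T)^2}$ be the range, and let the control input be $$\omega=\begin{cases} k\left[V\cos\!\left(\pi-\sin^{-1}\!\left(\frac{r_a}{r(t)}\right)\right)-\dot r(t)\right], & r(t)\ge r_a,\\ 0,&\text{otherwise},\end{cases}$$ where $k\neq 0$ is a constant gain and $r_a\ge 0$ is a constant parameter. If a stable circular motion exists for the closed-loop system, then its radius is $r^\star=\sqrt{r_a^2+\frac{1}{k^2}}$. Moreover, in that motion the UAV rotates clockwise if $k>0$ and counterclockwise if $k<0$.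
   Context: A stable circular motion means that the UAV moves around the target $T$ with a constant speed and at a constant distance (radius) $r$ from $T$. $\sin^{-1}$ denotes the principal branch of arcsine with values in $[-\pi/2,\pi/2]$. *)

From Stdlib Require Import Reals.
From Coquelicot Require Import Coquelicot.
Open Scope R_scope.

Definition range (xT yT : R) (x y : R -> R) (t : R) : R :=
  sqrt ((x t - xT) ^ 2 + (y t - yT) ^ 2).

Definition control (k V ra r rdot : R) : R :=
  if Rle_dec ra r then k * (V * cos (PI - asin (ra / r)) - rdot) else 0.

Definition closed_loop (V k ra xT yT : R) (x y psi : R -> R) : Prop :=
  forall t : R,
    is_derive x t (V * cos (psi t)) /\
    is_derive y t (V * sin (psi t)) /\
    is_derive psi t
      (control k V ra (range xT yT x y t) (Derive (range xT yT x y) t)).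

Definition circular_motion (xT yT : R) (x y : R -> R) (rc : R) : Prop :=
  forall t : R, range xT yT x y t = rc.

Definition ang_mom (V xT yT : R) (x y psi : R -> R) (t : R) : R :=
  (x t - xT) * (V * sin (psi t)) - (y t - yT) * (V * cos (psi t)).

Definition rotates_clockwise V xT yT x y psi : Prop :=
  forall t : R, ang_mom V xT yT x y psi t < 0.
Definition rotates_counterclockwise V xT yT x y psi : Prop :=
  forall t : R, ang_mom V xT yT x y psi t > 0.

(* On a circle about the target the range is constant, so its rate vanishes
   and the control law commands a constant turn rate omega.  Writing p for the
   position relative to T and u for the unit heading vector, differentiating
   |p|^2 = rc^2 gives p.u = 0, and differentiating p.u = 0 once more gives
   omega L = V^2, where L = p x pdot is the angular momentum about T.  Since
   p.u = 0, Lagrange's identity gives L^2 = V^2 rc^2, hence omega^2 rc^2 = V^2.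
   This forces omega <> 0, so rc >= ra and omega = -k V sqrt(1 - (ra/rc)^2),
   whence k^2 (rc^2 - ra^2) = 1.  Finally omega L = V^2 > 0 shows that L has
   the sign of omega, i.e. the opposite sign of k. *)

From Stdlib Require Import Reals Lra Psatz.
From Coquelicot Require Import Coquelicot.
Open Scope R_scope.

Lemma is_derive_sub_const (f : R -> R) (a t df : R) :
  is_derive f t df -> is_derive (fun u => f u - a) t df.
Proof.
  intro Hf.
  replace df with (df + 0) by ring.
  exact (is_derive_plus f (fun _ => - a) t df 0 Hf (is_derive_const (- a) t)).
Qed.

Lemma is_derive_cos_comp (f : R -> R) (t df : R) :
  is_derive f t df -> is_derive (fun u => cos (f u)) t (- sin (f t) * df).
Proof.
  intro Hf.
  replace (- sin (f t) * df) with (scal df (- sin (f t)))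
    by (unfold scal; simpl; unfold mult; simpl; ring).
  exact (is_derive_comp cos f t _ df (is_derive_cos (f t)) Hf).
Qed.

Lemma is_derive_sin_comp (f : R -> R) (t df : R) :
  is_derive f t df -> is_derive (fun u => sin (f u)) t (cos (f t) * df).
Proof.
  intro Hf.
  replace (cos (f t) * df) with (scal df (cos (f t)))
    by (unfold scal; simpl; unfold mult; simpl; ring).
  exact (is_derive_comp sin f t _ df (is_derive_sin (f t)) Hf).
Qed.

Lemma is_derive_constant_fun (f : R -> R) (c t l : R) :
  (forall u, f u = c) -> is_derive f t l -> l = 0.
Proof.
  intros Hc Hf.
  rewrite <- (is_derive_unique _ _ _ Hf), (Derive_ext _ (fun _ => c)) by exact Hc.
  apply Derive_const.
Qed.

Lemma cos_pi_minus_asin (q : R) :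
  -1 <= q <= 1 -> cos (PI - asin q) = - sqrt (1 - q²).
Proof. intro Hq. rewrite Rtrigo_facts.cos_pi_minus, cos_asin by exact Hq. reflexivity. Qed.

Lemma Rdiv_unit_interval (a b : R) : 0 <= a <= b -> 0 <= a / b <= 1.
Proof.
  intros [Ha Hab].
  destruct (Req_dec b 0) as [Hb | Hb].
  - replace a with 0 by lra. unfold Rdiv. rewrite Rmult_0_l. lra.
  - split; [apply Rdiv_le_0_compat; lra|].
    apply Rmult_le_reg_r with b; [lra|].
    unfold Rdiv. rewrite Rmult_assoc, Rinv_l; lra.
Qed.

Lemma control_steady_above (k V ra r : R) :
  0 <= ra <= r -> control k V ra r 0 = - (k * V * sqrt (1 - (ra / r)²)).
Proof.
  intro Hr. unfold control.
  destruct (Rle_dec ra r) as [_ | Hn]; [|lra].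
  pose proof (Rdiv_unit_interval ra r Hr).
  rewrite cos_pi_minus_asin by lra. ring.
Qed.

Lemma control_steady_below (k V ra r : R) : r < ra -> control k V ra r 0 = 0.
Proof. intro Hr. unfold control. destruct (Rle_dec ra r); [lra | reflexivity]. Qed.

Lemma control_steady_nonpos (k V ra r : R) :
  0 <= k -> 0 <= V -> 0 <= ra -> control k V ra r 0 <= 0.
Proof.
  intros Hk HV Hra.
  destruct (Rle_dec ra r) as [Hr | Hr].
  - rewrite control_steady_above by lra.
    pose proof (sqrt_pos (1 - (ra / r)²)).
    enough (0 <= k * V * sqrt (1 - (ra / r)²)) by lra.
    apply Rmult_le_pos; [apply Rmult_le_pos |]; lra.
  - rewrite control_steady_below; lra.
Qed.

Lemma control_steady_nonneg (k V ra r : R) :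
  k <= 0 -> 0 <= V -> 0 <= ra -> 0 <= control k V ra r 0.
Proof.
  intros Hk HV Hra.
  replace (control k V ra r 0) with (- control (- k) V ra r 0)
    by (unfold control; destruct (Rle_dec ra r); ring).
  pose proof (control_steady_nonpos (- k) V ra r); lra.
Qed.

Lemma control_steady_sqr (k V ra r : R) :
  0 <= ra <= r -> 0 < r ->
  (control k V ra r 0) ^ 2 * r ^ 2 = k ^ 2 * V ^ 2 * (r ^ 2 - ra ^ 2).
Proof.
  intros Hr Hr0.
  rewrite control_steady_above by exact Hr.
  pose proof (Rdiv_unit_interval ra r Hr) as Hq.
  assert (Hs : 0 <= 1 - (ra / r)²).
  { unfold Rsqr. assert (ra / r * (ra / r) <= 1 * 1) by (apply Rmult_le_compat; lra). lra. }
  replace ((- (k * V * sqrt (1 - (ra / r)²))) ^ 2)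
    with (k ^ 2 * V ^ 2 * (sqrt (1 - (ra / r)²) * sqrt (1 - (ra / r)²))) by ring.
  rewrite sqrt_sqrt by exact Hs.
  unfold Rsqr. field. lra.
Qed.

(* The only radius compatible with the closed loop: [omega^2 rc^2 = V^2]
   excludes [omega = 0], hence both [rc < ra] and [rc = 0]. *)
Lemma control_steady_radius (k V ra rc : R) :
  0 < V -> k <> 0 -> 0 <= ra -> 0 <= rc ->
  (control k V ra rc 0) ^ 2 * rc ^ 2 = V ^ 2 ->
  rc = sqrt (ra ^ 2 + 1 / k ^ 2).
Proof.
  intros HV Hk Hra Hrc Hom.
  assert (HV2 : 0 < V ^ 2) by (apply pow_lt; lra).
  assert (Hrc_ra : ra <= rc).
  { destruct (Rle_dec ra rc) as [Hr | Hr]; [exact Hr|].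
    rewrite control_steady_below in Hom by lra. lra. }
  assert (Hrc0 : 0 < rc).
  { destruct (Req_dec rc 0) as [E | E]; [|lra].
    rewrite E in Hom. lra. }
  rewrite control_steady_sqr in Hom by lra.
  assert (Hk2 : k ^ 2 * (rc ^ 2 - ra ^ 2) = 1).
  { apply Rmult_eq_reg_l with (V ^ 2); lra. }
  replace (ra ^ 2 + 1 / k ^ 2) with (rc ^ 2) by (rewrite <- Hk2; field; exact Hk).
  rewrite sqrt_pow2; lra.
Qed.

(* Component of the relative position p = (x - xT, y - yT) along the unit
   heading vector (cos psi, sin psi); [V] times it is [r * rdot]. *)
Definition heading_proj (xT yT : R) (x y psi : R -> R) (t : R) : R :=
  (x t - xT) * cos (psi t) + (y t - yT) * sin (psi t).

Section Kinematics.

Variables (V xT yT : R) (x y psi : R -> R) (t : R).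
Hypothesis Hx : is_derive x t (V * cos (psi t)).
Hypothesis Hy : is_derive y t (V * sin (psi t)).

Lemma is_derive_range_sqr :
  is_derive (fun u => (x u - xT) * (x u - xT) + (y u - yT) * (y u - yT)) t
    (2 * V * heading_proj xT yT x y psi t).
Proof.
  pose proof (is_derive_sub_const x xT t _ Hx) as Hpx.
  pose proof (is_derive_sub_const y yT t _ Hy) as Hpy.
  replace (2 * V * heading_proj xT yT x y psi t) with
    (V * cos (psi t) * (x t - xT) + (x t - xT) * (V * cos (psi t))
     + (V * sin (psi t) * (y t - yT) + (y t - yT) * (V * sin (psi t))))
    by (unfold heading_proj; ring).
  exact (is_derive_plus _ _ t _ _ (Derive.is_derive_mult _ _ t _ _ Hpx Hpx)
                                  (Derive.is_derive_mult _ _ t _ _ Hpy Hpy)).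
Qed.

Lemma is_derive_heading_proj (dpsi : R) :
  is_derive psi t dpsi ->
  is_derive (heading_proj xT yT x y psi) t
    (V - dpsi * ((x t - xT) * sin (psi t) - (y t - yT) * cos (psi t))).
Proof.
  intro Hpsi.
  pose proof (is_derive_sub_const x xT t _ Hx) as Hpx.
  pose proof (is_derive_sub_const y yT t _ Hy) as Hpy.
  replace (V - dpsi * ((x t - xT) * sin (psi t) - (y t - yT) * cos (psi t))) with
    (V * cos (psi t) * cos (psi t) + (x t - xT) * (- sin (psi t) * dpsi)
     + (V * sin (psi t) * sin (psi t) + (y t - yT) * (cos (psi t) * dpsi)))
    by (pose proof (sin2_cos2 (psi t)) as H; unfold Rsqr in H;
        transitivity (V * (sin (psi t) * sin (psi t) + cos (psi t) * cos (psi t))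
          - dpsi * ((x t - xT) * sin (psi t) - (y t - yT) * cos (psi t)));
        [ring | rewrite H; ring]).
  exact (is_derive_plus _ _ t _ _
           (Derive.is_derive_mult _ _ t _ _ Hpx (is_derive_cos_comp psi t dpsi Hpsi))
           (Derive.is_derive_mult _ _ t _ _ Hpy (is_derive_sin_comp psi t dpsi Hpsi))).
Qed.

End Kinematics.

Lemma ang_mom_lagrange (V xT yT : R) (x y psi : R -> R) (t : R) :
  ang_mom V xT yT x y psi t ^ 2 + V ^ 2 * heading_proj xT yT x y psi t ^ 2
  = V ^ 2 * ((x t - xT) * (x t - xT) + (y t - yT) * (y t - yT)).
Proof.
  unfold ang_mom, heading_proj.
  pose proof (sin2_cos2 (psi t)) as H. unfold Rsqr in H.
  transitivity (V ^ 2 * ((x t - xT) * (x t - xT) + (y t - yT) * (y t - yT))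
                * (sin (psi t) * sin (psi t) + cos (psi t) * cos (psi t)));
    [ring | rewrite H; ring].
Qed.

Section CircularMotion.

Variables (V k ra xT yT rc : R) (x y psi : R -> R).
Hypothesis HV : 0 < V.
Hypothesis Hloop : closed_loop V k ra xT yT x y psi.
Hypothesis Hcirc : circular_motion xT yT x y rc.

Let omega := control k V ra rc 0.

Lemma range_sqr_circular (t : R) :
  (x t - xT) * (x t - xT) + (y t - yT) * (y t - yT) = rc ^ 2.
Proof.
  rewrite <- (Hcirc t). unfold range.
  rewrite pow2_sqrt; [ring|].
  apply Rplus_le_le_0_compat; apply pow2_ge_0.
Qed.

Lemma turn_rate_circular (t : R) : is_derive psi t omega.
Proof.
  destruct (Hloop t) as (_ & _ & Hpsi).
  rewrite (Derive_ext _ (fun _ => rc)), Derive_const, Hcirc in Hpsi by exact Hcirc.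
  exact Hpsi.
Qed.

Lemma heading_proj_circular (t : R) : heading_proj xT yT x y psi t = 0.
Proof.
  destruct (Hloop t) as (Hx & Hy & _).
  pose proof (is_derive_constant_fun _ _ t _ range_sqr_circular
                (is_derive_range_sqr V xT yT x y psi t Hx Hy)).
  apply Rmult_eq_reg_l with (2 * V); lra.
Qed.

Lemma turn_rate_ang_mom (t : R) : omega * ang_mom V xT yT x y psi t = V ^ 2.
Proof.
  destruct (Hloop t) as (Hx & Hy & _).
  pose proof (is_derive_constant_fun _ _ t _ heading_proj_circular
                (is_derive_heading_proj V xT yT x y psi t Hx Hy omega
                   (turn_rate_circular t))) as H.
  unfold ang_mom. nra.
Qed.

Lemma ang_mom_sqr_circular (t : R) : ang_mom V xT yT x y psi t ^ 2 = V ^ 2 * rc ^ 2.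
Proof.
  pose proof (ang_mom_lagrange V xT yT x y psi t) as H.
  rewrite heading_proj_circular, range_sqr_circular in H. lra.
Qed.

Lemma turn_rate_sqr_circular : omega ^ 2 * rc ^ 2 = V ^ 2.
Proof.
  apply Rmult_eq_reg_l with (V ^ 2); [| apply pow_nonzero; lra].
  transitivity ((omega * ang_mom V xT yT x y psi 0) ^ 2).
  - rewrite Rpow_mult_distr, ang_mom_sqr_circular. ring.
  - rewrite turn_rate_ang_mom. ring.
Qed.

End CircularMotion.

Theorem lemma1 (V k ra xT yT : R) (x y psi : R -> R) (rc : R) :
  0 < V -> k <> 0 -> 0 <= ra ->
  closed_loop V k ra xT yT x y psi ->
  circular_motion xT yT x y rc ->
  rc = sqrt (ra ^ 2 + 1 / k ^ 2) /\
  (0 < k -> rotates_clockwise V xT yT x y psi) /\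
  (k < 0 -> rotates_counterclockwise V xT yT x y psi).
Proof.
  intros HV Hk Hra Hloop Hcirc.
  assert (Hrc : 0 <= rc) by (rewrite <- (Hcirc 0); apply sqrt_pos).
  pose proof (turn_rate_ang_mom V k ra xT yT rc x y psi HV Hloop Hcirc) as HL.
  split; [|split].
  - exact (control_steady_radius k V ra rc HV Hk Hra Hrc
             (turn_rate_sqr_circular V k ra xT yT rc x y psi HV Hloop Hcirc)).
  - intros Hk0 t. specialize (HL t).
    pose proof (control_steady_nonpos k V ra rc); nra.
  - intros Hk0 t. specialize (HL t).
    pose proof (control_steady_nonneg k V ra rc); nra.
Qed.
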